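(* Let $\mathsf{P}$ be a program of $\mathcal{H}$. If $\mathsf{P}$ is stratified, then the perfect model of $\mathsf{Gr(P)}$ exists, and consequently the two-valued Herbrand interpretation $\mathcal{N}_\mathsf{P}$ of $\mathsf{P}$ is defined; moreover $\mathcal{N}_\mathsf{P}$ coincides with the well-founded Herbrand interpretation $\mathcal{M}_\mathsf{P}$ of $\mathsf{P}$.
   Context: Types of $\mathcal{H}$: base types $\iota,o$; predicate types $\pi::=o\mid\rho\to\pi$; argument types $\rho::=\iota\mid\pi$. Terms are built from predicate/individual variables and constants and function symbols (types $\iota^n\to\iota$) by typed application; atoms are terms of type $o$; literals are atoms, equalities $(\mathsf{E}_1\approx\mathsf{E}_2)$ of terms of type $\iota$, and negated atoms $\sim\mathsf{E}$. A clause is $\mathsf{p}\,\mathsf{V}_1\cdots\mathsf{V}_n\leftarrow\mathsf{L}_1,\dots,\mathsf{L}_m$ with $\mathsf{p}$ a predicate constant of type $\rho_1\to\cdots\to\rho_n\to o$, distinct variables $\mathsf{V}_i:\rho_i$, literals $\mathsf{L}_j$; a program is a finite set of clauses. Stratified: predicate type $\pi$ is greater than $\pi'$ if $\pi=\rho_1\to\cdots\to\rho_n\to\pi'$, $n\ge1$. $\mathsf{P}$ is stratified if its predicate constants can be partitioned into finitely many sets $S_1,\dots,S_r$ ($\mathit{stratum}(\mathsf{r})=i$ iff $\mathsf{r}\in S_i$) such that for every clause $\mathsf{H}\leftarrow\mathsf{A}_1,\dots,\mathsf{A}_m,\sim\mathsf{B}_1,\dots,\sim\mathsf{B}_n$ with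 head predicate constant $\mathsf{p}$: if $\mathsf{A}_i$ starts with predicate constant $\mathsf{q}$ then $\mathit{stratum}(\mathsf{q})\le\mathit{stratum}(\mathsf{p})$; if $\mathsf{A}_i$ starts with predicate variable $\mathsf{Q}$ then $\mathit{stratum}(\mathsf{q})\le\mathit{stratum}(\mathsf{p})$ for all predicate constants $\mathsf{q}$ of $\mathsf{P}$ of type greater than or equal to that of $\mathsf{Q}$; if $\mathsf{B}_i$ starts with predicate constant $\mathsf{q}$ then $\mathit{stratum}(\mathsf{q})<\mathit{stratum}(\mathsf{p})$; if $\mathsf{B}_i$ starts with predicate variable $\mathsf{Q}$ then $\mathit{stratum}(\mathsf{q})<\mathit{stratum}(\mathsf{p})$ for all predicate constants $\mathsf{q}$ of $\mathsf{P}$ of type greater than or equal to that of $\mathsf{Q}$. Semantics: $U_{\mathsf{P},\rho}$ is the set of ground terms of type $\rho$ built from symbols of $\mathsf{P}$; $\mathsf{Gr(P)}$ is the set of all clauses obtained from clauses of $\mathsf{P}$ by substituting for each variable an element of $U_{\mathsf{P},\rho}$ of its type, regarded as a (possibly infinite) propositional program over the ground atoms $U_{\mathsf{P},o}$ (ground equalities being constants true/false according to syntactic identity). The perfect model of $\mathsf{Gr(P)}$ is the standard (two-valued) perfect model of a propositional program (in the sense of Przymusinski), when it exists; the well-founded model is the standard three-valued well-founded model. $\mathcal{N}_\mathsf{P}$ (resp. $\mathcal{M}_\mathsf{P}$) is the Herbrand interpretation of $\mathsf{P}$ — symbols interpreted by themselves, application syntactic — whose valuation assigns to every ground atom its value in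 the perfect model (resp. well-founded model) of $\mathsf{Gr(P)}$; Herbrand interpretations are identified when their valuation functions coincide. *)

From Stdlib Require Import List Arith.
Import ListNotations.

Inductive ty : Type :=
| TI : ty
| TO : ty
| TArr : ty -> ty -> ty.

Definition ty_eq_dec (a b : ty) : {a = b} + {a <> b}.
Proof. decide equality. Defined.

Fixpoint is_pred_ty (t : ty) : Prop :=
  match t with
  | TO => True
  | TArr r p => (r = TI \/ is_pred_ty r) /\ is_pred_ty p
  | TI => False
  end.

Definition is_arg_ty (t : ty) : Prop := t = TI \/ is_pred_ty t.

Fixpoint fun_ty (n : nat) : ty :=
  match n with
  | 0 => TI
  | S k => TArr TI (fun_ty k)
  end.

Definition const_ty_ok (t : ty) : Prop :=
  t = TI \/ (exists n, 1 <= n /\ t = fun_ty n) \/ is_pred_ty t.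

Definition var_ty_ok (t : ty) : Prop := t = TI \/ is_pred_ty t.

Fixpoint ty_ge (t t' : ty) : Prop :=
  t = t' \/ match t with TArr _ b => ty_ge b t' | _ => False end.

Inductive term : Type :=
| TVar : nat -> ty -> term
| TCon : nat -> ty -> term
| TApp : term -> term -> term.

Definition term_eq_dec (a b : term) : {a = b} + {a <> b}.
Proof. decide equality; first [apply ty_eq_dec | apply Nat.eq_dec]. Defined.

Inductive has_type : term -> ty -> Prop :=
| ht_var : forall n t, var_ty_ok t -> has_type (TVar n t) t
| ht_con : forall n t, const_ty_ok t -> has_type (TCon n t) t
| ht_app : forall f a r s, has_type f (TArr r s) -> has_type a r ->
    has_type (TApp f a) s.

Fixpoint head_of (t : term) : term :=
  match t with
  | TApp f _ => head_of f
  | x => x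
  end.

Fixpoint consts_term (t : term) : list (nat * ty) :=
  match t with
  | TVar _ _ => []
  | TCon n s => [(n, s)]
  | TApp f a => consts_term f ++ consts_term a
  end.

Fixpoint vars_term (t : term) : list (nat * ty) :=
  match t with
  | TVar n s => [(n, s)]
  | TCon _ _ => []
  | TApp f a => vars_term f ++ vars_term a
  end.

Definition ground (t : term) : Prop := vars_term t = [].

Inductive literal : Type :=
| LAtom : term -> literal
| LEq : term -> term -> literal
| LNeg : term -> literal.

(* clause   p V_1 ... V_n <- L_1, ..., L_m *)
Record clause : Type := mkClause {
  cl_pred : nat * ty;
  cl_hvars : list (nat * ty);
  cl_body : list literal }.

Definition program := list clause.

Definition arrows (args : list ty) (res : ty) : ty :=
  fold_right TArr res args.

Definition wf_literal (l : literal) : Prop :=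
  match l with
  | LAtom e => has_type e TO
  | LEq e1 e2 => has_type e1 TI /\ has_type e2 TI
  | LNeg e => has_type e TO
  end.

Definition wf_clause (c : clause) : Prop :=
  is_pred_ty (snd (cl_pred c)) /\
  snd (cl_pred c) = arrows (map snd (cl_hvars c)) TO /\
  NoDup (cl_hvars c) /\
  (forall v, In v (cl_hvars c) -> is_arg_ty (snd v)) /\
  (forall l, In l (cl_body c) -> wf_literal l).

Definition wf_program (P : program) : Prop :=
  forall c, In c P -> wf_clause c.

Definition consts_literal (l : literal) : list (nat * ty) :=
  match l with
  | LAtom e => consts_term e
  | LEq e1 e2 => consts_term e1 ++ consts_term e2
  | LNeg e => consts_term e
  end.

Definition vars_literal (l : literal) : list (nat * ty) :=
  match l with
  | LAtom e => vars_term e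
  | LEq e1 e2 => vars_term e1 ++ vars_term e2
  | LNeg e => vars_term e
  end.

Definition consts_clause (c : clause) : list (nat * ty) :=
  cl_pred c :: flat_map consts_literal (cl_body c).

Definition vars_clause (c : clause) : list (nat * ty) :=
  cl_hvars c ++ flat_map vars_literal (cl_body c).

Definition consts_prog (P : program) : list (nat * ty) :=
  flat_map consts_clause P.

Definition pred_const_of (P : program) (q : nat * ty) : Prop :=
  In q (consts_prog P) /\ is_pred_ty (snd q).

Definition stratified (P : program) : Prop :=
  exists stratum : nat * ty -> nat,
  forall c, In c P ->
  forall l, In l (cl_body c) ->
  match l with
  | LAtom e =>
      match head_of e with
      | TCon n s => stratum (n, s) <= stratum (cl_pred c)
      | TVar _ s => forall q, pred_const_of P q -> ty_ge (snd q) s ->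
                      stratum q <= stratum (cl_pred c)
      | _ => True
      end
  | LNeg e =>
      match head_of e with
      | TCon n s => stratum (n, s) < stratum (cl_pred c)
      | TVar _ s => forall q, pred_const_of P q -> ty_ge (snd q) s ->
                      stratum q < stratum (cl_pred c)
      | _ => True
      end
  | LEq _ _ => True
  end.
(* Since P is finite, any such function takes finitely many values on the
   predicate constants of P, i.e. it defines a partition into finitely
   many strata S_1,...,S_r. *)

Definition herbrand_univ (P : program) (r : ty) (t : term) : Prop :=
  has_type t r /\ ground t /\ (forall q, In q (consts_term t) -> In q (consts_prog P)).

Definition ground_atom (P : program) (t : term) : Prop := herbrand_univ P TO t.

(* Propositional (possibly infinite) programs over an atom type A *)
Inductive plit (A : Type) : Type :=
| PPos : A -> plit A
| PNeg : A -> plit A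
| PConst : bool -> plit A.
Arguments PPos {A} _.
Arguments PNeg {A} _.
Arguments PConst {A} _.

Record prule (A : Type) : Type := mkPRule { rhead : A; rbody : list (plit A) }.
Arguments mkPRule {A} _ _.
Arguments rhead {A} _.
Arguments rbody {A} _.

Definition pprogram (A : Type) := prule A -> Prop.

Fixpoint subst (th : nat -> ty -> term) (t : term) : term :=
  match t with
  | TVar n s => th n s
  | TCon n s => TCon n s
  | TApp f a => TApp (subst th f) (subst th a)
  end.

Definition inst_literal (th : nat -> ty -> term) (l : literal) : plit term :=
  match l with
  | LAtom e => PPos (subst th e)
  | LNeg e => PNeg (subst th e)
  | LEq e1 e2 =>
      PConst (if term_eq_dec (subst th e1) (subst th e2) then true else false)
  end.

Definition inst_clause (th : nat -> ty -> term) (c : clause) : prule term :=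
  mkPRule
    (fold_left (fun acc v => TApp acc (th (fst v) (snd v))) (cl_hvars c)
       (TCon (fst (cl_pred c)) (snd (cl_pred c))))
    (map (inst_literal th) (cl_body c)).

Definition Gr (P : program) : pprogram term :=
  fun r => exists c th, In c P /\
    (forall v, In v (vars_clause c) -> herbrand_univ P (snd v) (th (fst v) (snd v))) /\
    r = inst_clause th c.

Section Propositional.
Variable A : Type.
Variable Pr : pprogram A.

Definition lit_true2 (M : A -> Prop) (l : plit A) : Prop :=
  match l with
  | PPos a => M a
  | PNeg a => ~ M a
  | PConst b => b = true
  end.

Definition is_model (M : A -> Prop) : Prop :=
  forall r, Pr r -> (forall l, In l (rbody r) -> lit_true2 M l) -> M (rhead r).

Definition dep_edge (a b : A) (neg : bool) : Prop :=
  exists r, Pr r /\ rhead r = a /\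
    ((In (PPos b) (rbody r) /\ neg = false) \/ (In (PNeg b) (rbody r) /\ neg = true)).

Inductive dep_path : A -> A -> bool -> Prop :=
| dp_one : forall a b n, dep_edge a b n -> dep_path a b n
| dp_step : forall a b c n m, dep_edge a b n -> dep_path b c m ->
    dep_path a c (n || m).

Definition prio_lt (a b : A) : Prop := dep_path a b true.

Definition preferable (N M : A -> Prop) : Prop :=
  ~ (forall a, N a <-> M a) /\
  forall a, N a -> ~ M a -> exists b, M b /\ ~ N b /\ prio_lt a b.

Definition perfect_model (M : A -> Prop) : Prop :=
  is_model M /\ ~ (exists N, is_model N /\ preferable N M).

(* Well-founded model (Van Gelder, Ross, Schlipf): a partial interpretation
   is a pair (T, F) of sets of atoms (true atoms, false atoms). *)
Definition lit_true3 (T F : A -> Prop) (l : plit A) : Prop :=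
  match l with
  | PPos a => T a
  | PNeg a => F a
  | PConst b => b = true
  end.

Definition lit_false3 (T F : A -> Prop) (l : plit A) : Prop :=
  match l with
  | PPos a => F a
  | PNeg a => T a
  | PConst b => b = false
  end.

Definition unfounded (T F : A -> Prop) (U : A -> Prop) : Prop :=
  forall a, U a -> forall r, Pr r -> rhead r = a ->
    (exists l, In l (rbody r) /\ lit_false3 T F l) \/
    (exists b, In (PPos b) (rbody r) /\ U b).

Definition GUS (T F : A -> Prop) (a : A) : Prop :=
  exists U, unfounded T F U /\ U a.

Definition TP (T F : A -> Prop) (a : A) : Prop :=
  exists r, Pr r /\ rhead r = a /\ forall l, In l (rbody r) -> lit_true3 T F l.

(* fixpoint of W_P(I) = T_P(I) u ~U_P(I) *)
Definition W_fixpoint (T F : A -> Prop) : Prop :=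
  (forall a, T a <-> TP T F a) /\ (forall a, F a <-> GUS T F a).

Definition well_founded_model (T F : A -> Prop) : Prop :=
  W_fixpoint T F /\
  forall T' F', W_fixpoint T' F' ->
    (forall a, T a -> T' a) /\ (forall a, F a -> F' a).

End Propositional.

Arguments is_model {A} _ _.
Arguments perfect_model {A} _ _.
Arguments well_founded_model {A} _ _ _.

From Stdlib Require Import List Arith Lia Classical.

(* Stratifying the predicate constants of P makes Gr(P) locally stratified:
   give each ground atom the stratum of its head constant; then positive body
   atoms never lie above the head and negated ones lie strictly below it, since
   a predicate variable is instantiated by a constant of greater or equal type.
   Over such a level function, iterating least models with negation read in the
   previous iterate yields a model M that is settled level by level.  Comparing
   a model with M at an atom of minimal level where they differ shows that M is
   the unique perfect model, and an induction on levels shows that (M, not M) is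
   the least fixpoint of W_P, i.e. the well-founded model is two-valued and
   equal to M. *)

Section LevelStratified.

Variables (A : Type) (Pr : pprogram A) (lvl : A -> nat).
Hypothesis lvl_pos : forall r b, Pr r -> In (PPos b) (rbody r) -> lvl b <= lvl (rhead r).
Hypothesis lvl_neg : forall r b, Pr r -> In (PNeg b) (rbody r) -> lvl b < lvl (rhead r).

(* The least model of the Gelfond-Lifschitz reduct of [Pr] by [N]. *)
Inductive derivable (N : A -> Prop) : A -> Prop :=
| derivable_rule : forall r, Pr r ->
    (forall b, In (PPos b) (rbody r) -> derivable N b) ->
    (forall b, In (PNeg b) (rbody r) -> ~ N b) ->
    (forall c, In (PConst c) (rbody r) -> c = true) -> derivable N (rhead r).

Lemma derivable_agree N1 N2 s :
  (forall b, lvl b < s -> (N1 b <-> N2 b)) ->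
  forall a, lvl a <= s -> derivable N1 a -> derivable N2 a.
Proof.
  intros Hagree a Ha Hder. induction Hder as [r Hr _ IHpos Hneg Hconst].
  constructor; auto.
  - intros b Hb. apply IHpos; auto. specialize (lvl_pos r b Hr Hb). lia.
  - intros b Hb HN2. apply (Hneg b Hb), Hagree; auto.
    specialize (lvl_neg r b Hr Hb). lia.
Qed.

Fixpoint stage (k : nat) : A -> Prop :=
  match k with
  | 0 => derivable (fun _ => False)
  | S k => derivable (stage k)
  end.

Lemma stage_succ k b : lvl b <= k -> (stage k b <-> stage (S k) b).
Proof.
  revert b. induction k as [|k IH]; intros b Hb.
  - split; apply derivable_agree with (s := 0); auto; intros; lia.
  - split; apply derivable_agree with (s := S k); auto; intros c Hc;
      [| symmetry]; apply IH; lia.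
Qed.

Lemma stage_le k j b : k <= j -> lvl b <= k -> (stage k b <-> stage j b).
Proof.
  intros Hkj Hb. induction Hkj as [|j Hkj IH]; [tauto|].
  rewrite IH. apply stage_succ. lia.
Qed.

Definition strat_model (a : A) : Prop := stage (lvl a) a.

Local Notation M := strat_model.

Lemma strat_model_stage k b : lvl b <= k -> (M b <-> stage k b).
Proof. intros. apply stage_le; lia. Qed.

Lemma strat_model_derivable a : M a <-> derivable M a.
Proof.
  unfold strat_model at 1. rewrite (stage_succ (lvl a) a) by lia.
  split; apply derivable_agree with (s := lvl a); auto; intros b Hb;
    [symmetry|]; apply strat_model_stage; lia.
Qed.

Lemma strat_model_is_model : is_model Pr M.
Proof.
  intros r Hr Hbody. apply strat_model_derivable. constructor; auto.
  - intros b Hb. apply strat_model_derivable, (Hbody _ Hb).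
  - intros b Hb. exact (Hbody _ Hb).
  - intros c Hc. exact (Hbody _ Hc).
Qed.

Lemma strat_model_le_model N s :
  is_model Pr N -> (forall b, lvl b < s -> (M b <-> N b)) ->
  forall a, lvl a <= s -> M a -> N a.
Proof.
  intros HN Hagree a Ha Ma. apply strat_model_derivable in Ma.
  induction Ma as [r Hr _ IHpos Hneg Hconst].
  apply HN; auto. intros [b|b|c] Hl; simpl.
  - apply IHpos; auto. specialize (lvl_pos r b Hr Hl). lia.
  - intro Nb. apply (Hneg b Hl), Hagree; auto. specialize (lvl_neg r b Hr Hl). lia.
  - auto.
Qed.

Lemma dep_edge_level a b n :
  dep_edge A Pr a b n -> lvl b <= lvl a /\ (n = true -> lvl b < lvl a).
Proof.
  intros [r [Hr [<- [[Hb ->] | [Hb ->]]]]].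
  - split; [auto | discriminate].
  - specialize (lvl_neg r b Hr Hb). split; [lia | auto].
Qed.

Lemma dep_path_level a b n :
  dep_path A Pr a b n -> lvl b <= lvl a /\ (n = true -> lvl b < lvl a).
Proof.
  induction 1 as [a b n He | a b c n m He _ [IHle IHlt]].
  - exact (dep_edge_level a b n He).
  - destruct (dep_edge_level a b n He) as [Ele Elt].
    split; [lia|]. destruct n; [specialize (Elt eq_refl); lia|].
    destruct m; [specialize (IHlt eq_refl); lia | discriminate].
Qed.

Lemma prio_lt_level a b : prio_lt A Pr a b -> lvl b < lvl a.
Proof. intro H. exact (proj2 (dep_path_level a b true H) eq_refl). Qed.

Lemma ex_level_minimal (D : A -> Prop) a :
  D a -> exists m, D m /\ forall b, lvl b < lvl m -> ~ D b.
Proof.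
  induction a as [a IH] using (well_founded_induction (well_founded_ltof A lvl)).
  intro Da. destruct (classic (exists b, lvl b < lvl a /\ D b)) as [[b [Hb Db]] | Hmin].
  - exact (IH b Hb Db).
  - exists a. split; [exact Da | intros b Hb Db; apply Hmin; eauto].
Qed.

Lemma ex_minimal_disagreement (N1 N2 : A -> Prop) :
  ~ (forall a, N1 a <-> N2 a) ->
  exists m, ~ (N1 m <-> N2 m) /\ forall b, lvl b < lvl m -> (N1 b <-> N2 b).
Proof.
  intro Hdiff. apply not_all_ex_not in Hdiff as [a Ha].
  destruct (ex_level_minimal (fun x => ~ (N1 x <-> N2 x)) a Ha) as [m [Hm Hmin]].
  exists m. split; [exact Hm|]. intros b Hb. apply NNPP, Hmin, Hb.
Qed.

Theorem strat_model_perfect : perfect_model Pr M.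
Proof.
  split; [exact strat_model_is_model|]. intros [N [HN [Hdiff Hpref]]].
  destruct (ex_minimal_disagreement N M Hdiff) as [m [Hm Hbelow]].
  destruct (classic (M m)) as [Mm | nMm].
  - apply Hm. split; intros _; [exact Mm|].
    apply (strat_model_le_model N (lvl m)); auto. intros b Hb. symmetry. auto.
  - assert (Nm : N m) by tauto.
    destruct (Hpref m Nm nMm) as [b [Mb [nNb Hprio]]].
    apply prio_lt_level in Hprio.
    specialize (Hbelow b Hprio). tauto.
Qed.

Section Graft.

Variables (M' : A -> Prop) (s : nat).
Hypothesis M'_model : is_model Pr M'.
Hypothesis strat_model_le_M' : forall x, lvl x <= s -> M x -> M' x.

(* [M] up to level [s], [M'] above it, plus every atom with lower priority
   than an atom of [M'] missing from [M] at level [<= s]: the extra atoms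
   make [graft] a model, and each is excused by the atom it reaches. *)
Definition graft (x : A) : Prop :=
  (lvl x <= s /\ M x) \/
  (s < lvl x /\ (M' x \/ exists b, lvl b <= s /\ M' b /\ ~ M b /\ prio_lt A Pr x b)).

Lemma graft_is_model : is_model Pr graft.
Proof.
  intros r Hr Hbody. destruct (le_lt_dec (lvl (rhead r)) s) as [Hle | Hlt].
  - left. split; [exact Hle|]. apply strat_model_is_model; auto.
    intros [b|b|c] Hl; specialize (Hbody _ Hl); simpl in *.
    + specialize (lvl_pos r b Hr Hl). destruct Hbody as [[_ Mb] | [Hb _]]; [exact Mb | lia].
    + specialize (lvl_neg r b Hr Hl). intro Mb. apply Hbody. left. split; [lia | exact Mb].
    + exact Hbody.
  - right. split; [exact Hlt|].
    destruct (classic (forall l, In l (rbody r) -> lit_true2 A M' l)) as [HM'body | Hfalse].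
    { left. apply M'_model; auto. }
    right. apply not_all_ex_not in Hfalse as [l Hl].
    apply imply_to_and in Hl as [Hl HnM'l].
    specialize (Hbody _ Hl). destruct l as [b|b|c]; simpl in *.
    + destruct Hbody as [[Hb Mb] | [_ [M'b | [c [Hc [M'c [nMc Hprio]]]]]]].
      * exfalso. apply HnM'l, strat_model_le_M'; auto.
      * contradiction.
      * exists c. repeat split; auto.
        apply (dp_step A Pr _ b c false true); [exists r; auto | exact Hprio].
    + apply NNPP in HnM'l. exists b.
      assert (Hb : lvl b <= s).
      { destruct (le_lt_dec (lvl b) s) as [Hb | Hb]; [exact Hb|].
        exfalso. apply Hbody. right. auto. }
      repeat split; auto.
      * intro Mb. apply Hbody. left. auto.
      * apply dp_one. exists r. auto.
    + contradiction.
Qed.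

Lemma graft_preferable m :
  lvl m <= s -> M' m -> ~ M m -> preferable A Pr graft M'.
Proof.
  intros Hm M'm nMm. split.
  - intro Heq. apply Heq in M'm as [[_ Mm] | [Hlt _]]; [tauto | lia].
  - intros x [[Hx Mx] | [Hx [M'x | [b [Hb [M'b [nMb Hprio]]]]]]] nM'x.
    + exfalso. apply nM'x, strat_model_le_M'; auto.
    + contradiction.
    + exists b. repeat split; auto.
      intros [[_ Mb] | [Hlt _]]; [tauto | lia].
Qed.

End Graft.

Theorem perfect_model_unique M' : perfect_model Pr M' -> forall a, M' a <-> M a.
Proof.
  intros [HM' Hnone]. apply NNPP. intro Hdiff.
  destruct (ex_minimal_disagreement M' M Hdiff) as [m [Hm Hbelow]].
  assert (Hle : forall x, lvl x <= lvl m -> M x -> M' x).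
  { apply strat_model_le_model; auto. intros b Hb. symmetry. auto. }
  assert (nMm : ~ M m) by (intro Mm; apply Hm; split; auto).
  assert (M'm : M' m) by tauto.
  apply Hnone. exists (graft M' (lvl m)). split.
  - apply graft_is_model; auto.
  - exact (graft_preferable M' (lvl m) Hle m (le_n _) M'm nMm).
Qed.

Lemma lit_true3_compl (T : A -> Prop) l :
  lit_true3 A T (fun x => ~ T x) l <-> lit_true2 A T l.
Proof. destruct l; reflexivity. Qed.

Lemma lit_false3_compl (T : A -> Prop) l :
  ~ lit_true2 A T l -> lit_false3 A T (fun x => ~ T x) l.
Proof. destruct l as [b|b|[]]; simpl; tauto. Qed.

Lemma TP_strat_model a : TP A Pr M (fun x => ~ M x) a <-> M a.
Proof.
  split.
  - intros [r [Hr [<- Hbody]]]. apply strat_model_is_model; [exact Hr|].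
    intros l Hl. apply lit_true3_compl, Hbody, Hl.
  - intro Ma. apply strat_model_derivable in Ma.
    destruct Ma as [r Hr Hpos Hneg Hconst].
    exists r. repeat split; auto. intros [b|b|c] Hl; simpl; auto.
    apply strat_model_derivable; auto.
Qed.

Lemma compl_strat_model_unfounded :
  unfounded A Pr M (fun x => ~ M x) (fun x => ~ M x).
Proof.
  intros a nMa r Hr <-. left. apply NNPP. intro Hnone. apply nMa.
  apply strat_model_is_model; auto. intros l Hl. apply NNPP. intro Hf.
  apply Hnone. exists l. split; [exact Hl | apply lit_false3_compl, Hf].
Qed.

Lemma unfounded_strat_model_disjoint U :
  unfounded A Pr M (fun x => ~ M x) U -> forall a, U a -> ~ M a.
Proof.
  intros HU a Ua Ma. apply strat_model_derivable in Ma. revert Ua.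
  induction Ma as [r Hr Hpos IHpos Hneg Hconst]. intro Ur.
  destruct (HU _ Ur r Hr eq_refl) as [[l [Hl Hf]] | [b [Hb Ub]]].
  2: exact (IHpos b Hb Ub).
  destruct l as [b|b|c]; simpl in Hf.
  - apply Hf, strat_model_derivable; auto.
  - exact (Hneg b Hl Hf).
  - rewrite (Hconst c Hl) in Hf. discriminate.
Qed.

Lemma strat_model_W_fixpoint : W_fixpoint A Pr M (fun x => ~ M x).
Proof.
  split; intro a.
  - symmetry. apply TP_strat_model.
  - split.
    + intro nMa. exists (fun x => ~ M x). split; [exact compl_strat_model_unfounded | exact nMa].
    + intros [U [HU Ua]]. exact (unfounded_strat_model_disjoint U HU a Ua).
Qed.

Section LeastFixpoint.

Variables (T F : A -> Prop).
Hypothesis TF_fixpoint : W_fixpoint A Pr T F.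

Lemma W_fixpoint_true_upto s :
  (forall b, lvl b < s -> ~ M b -> F b) -> forall a, lvl a <= s -> M a -> T a.
Proof.
  intros IH a Ha Ma. apply strat_model_derivable in Ma.
  induction Ma as [r Hr _ IHpos Hneg Hconst].
  apply TF_fixpoint. exists r. repeat split; auto.
  intros [b|b|c] Hl; simpl.
  - apply IHpos; auto. specialize (lvl_pos r b Hr Hl). lia.
  - apply IH; auto. specialize (lvl_neg r b Hr Hl). lia.
  - auto.
Qed.

(* Negated atoms of level [< s] that lie in [M] are already in [T], so the
   atoms of level [<= s] outside [M] form an unfounded set. *)
Lemma W_fixpoint_false_upto s :
  (forall b, lvl b < s -> M b -> T b) -> forall a, lvl a <= s -> ~ M a -> F a.
Proof.
  intros IH a Ha nMa. apply TF_fixpoint.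
  exists (fun x => lvl x <= s /\ ~ M x). split; [|auto].
  intros x [Hx nMx] r Hr <-.
  destruct (classic (forall l, In l (rbody r) -> lit_true2 A M l)) as [Hbody | Hfalse].
  { exfalso. apply nMx, strat_model_is_model; auto. }
  apply not_all_ex_not in Hfalse as [l Hl].
  apply imply_to_and in Hl as [Hl Hf].
  destruct l as [b|b|c]; simpl in Hf.
  - right. exists b. split; [exact Hl|]. specialize (lvl_pos r b Hr Hl). split; [lia | exact Hf].
  - left. exists (PNeg b). split; [exact Hl|]. simpl.
    apply IH; [specialize (lvl_neg r b Hr Hl); lia | apply NNPP, Hf].
  - left. exists (PConst c). split; [exact Hl|]. simpl. destruct c; tauto.
Qed.

Lemma W_fixpoint_contains_strat_model a : (M a -> T a) /\ (~ M a -> F a).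
Proof.
  enough (H : forall s a, lvl a < s -> (M a -> T a) /\ (~ M a -> F a))
    by (apply (H (S (lvl a))); lia).
  induction s as [|s IH]; intros b Hb; [lia|].
  split; [apply (W_fixpoint_true_upto s) | apply (W_fixpoint_false_upto s)];
    try lia; intros c Hc; apply IH, Hc.
Qed.

End LeastFixpoint.

Theorem strat_model_well_founded : well_founded_model Pr M (fun x => ~ M x).
Proof.
  split; [exact strat_model_W_fixpoint|]. intros T F HTF.
  split; intro a; apply (W_fixpoint_contains_strat_model T F HTF a).
Qed.

Theorem well_founded_model_strat_model T F :
  well_founded_model Pr T F -> forall a, (T a <-> M a) /\ (F a <-> ~ M a).
Proof.
  intros [HTF Hleast] a.
  destruct (Hleast _ _ strat_model_W_fixpoint) as [HT HF].
  destruct (W_fixpoint_contains_strat_model T F HTF a).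
  split; split; auto.
Qed.

End LevelStratified.

Lemma ty_ge_refl t : ty_ge t t.
Proof. destruct t; simpl; auto. Qed.

Lemma ty_ge_trans a b c : ty_ge a b -> ty_ge b c -> ty_ge a c.
Proof.
  revert b c. induction a as [| |a1 _ a2 IH]; intros b c [<- | Hab] Hbc;
    try exact Hbc; try contradiction.
  right. eapply IH; eauto.
Qed.

Lemma ty_ge_arr_r t r s : ty_ge t (TArr r s) -> ty_ge t s.
Proof.
  induction t as [| |t1 _ t2 IH]; simpl; intros [H | H]; try discriminate; try contradiction.
  - injection H as -> ->. right. apply ty_ge_refl.
  - right. apply IH, H.
Qed.

Lemma const_ty_ge_o_pred t : const_ty_ok t -> ty_ge t TO -> is_pred_ty t.
Proof.
  intros [-> | [[n [_ ->]] | Hpred]] Hge; auto.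
  - destruct Hge as [H | []]. discriminate.
  - exfalso. induction n as [|n IH]; simpl in Hge; destruct Hge as [H | H]; auto; discriminate.
Qed.

Lemma has_type_head e t : has_type e t -> exists n s,
  (head_of e = TCon n s /\ const_ty_ok s \/ head_of e = TVar n s) /\ ty_ge s t.
Proof.
  induction 1 as [n t _ | n t Hok | f a r s _ [n [s' [Hhead Hge]]] _ _].
  - exists n, t. split; [right; reflexivity | apply ty_ge_refl].
  - exists n, t. split; [left; auto | apply ty_ge_refl].
  - exists n, s'. split; [exact Hhead | eapply ty_ge_arr_r, Hge].
Qed.

Lemma head_var_in_vars e n s : head_of e = TVar n s -> In (n, s) (vars_term e).
Proof.
  induction e; simpl; intro H; try discriminate.
  - injection H as -> ->. auto.
  - apply in_or_app. auto.
Qed.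

Lemma head_con_in_consts e n s : head_of e = TCon n s -> In (n, s) (consts_term e).
Proof.
  induction e; simpl; intro H; try discriminate.
  - injection H as -> ->. auto.
  - apply in_or_app. auto.
Qed.

Lemma head_of_subst th e : head_of (subst th e) =
  match head_of e with TVar n s => head_of (th n s) | h => h end.
Proof. induction e; simpl; auto. Qed.

Lemma head_of_fold_app (f : nat * ty -> term) vs t :
  head_of (fold_left (fun acc v => TApp acc (f v)) vs t) = head_of t.
Proof. revert t. induction vs; simpl; intro t; [reflexivity | rewrite IHvs; reflexivity]. Qed.

Definition grounding (P : program) (vs : list (nat * ty)) (th : nat -> ty -> term) : Prop :=
  forall v, In v vs -> herbrand_univ P (snd v) (th (fst v) (snd v)).

(* The predicate constants that may head a ground instance of [e]. *)
Definition head_candidate (P : program) (e : term) (q : nat * ty) : Prop :=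
  match head_of e with
  | TCon n s => q = (n, s)
  | TVar _ s => pred_const_of P q /\ ty_ge (snd q) s
  | TApp _ _ => False
  end.

Lemma subst_head_candidate P th e :
  has_type e TO -> grounding P (vars_term e) th ->
  exists q, head_candidate P e q /\ head_of (subst th e) = TCon (fst q) (snd q).
Proof.
  intros He Hth. unfold head_candidate. rewrite head_of_subst.
  destruct (has_type_head e TO He) as [n [s [[[-> _] | Hvar] Hge]]].
  { exists (n, s). auto. }
  rewrite Hvar.
  destruct (Hth (n, s) (head_var_in_vars e n s Hvar)) as [Hty [Hground Hconsts]].
  simpl in Hty, Hground, Hconsts.
  destruct (has_type_head _ _ Hty) as [q1 [q2 [[[Hhead Hok] | Hhead] Hge']]].
  - exists (q1, q2). repeat split; auto.
    + apply Hconsts, head_con_in_consts, Hhead.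
    + apply const_ty_ge_o_pred; [exact Hok | eapply ty_ge_trans; eauto].
  - exfalso. apply head_var_in_vars in Hhead.
    unfold ground in Hground. rewrite Hground in Hhead. contradiction.
Qed.

Definition stratifies (P : program) (stratum : nat * ty -> nat) : Prop :=
  forall c, In c P ->
    (forall e q, In (LAtom e) (cl_body c) -> head_candidate P e q ->
       stratum q <= stratum (cl_pred c)) /\
    (forall e q, In (LNeg e) (cl_body c) -> head_candidate P e q ->
       stratum q < stratum (cl_pred c)).

Lemma stratified_stratifies P : stratified P -> exists stratum, stratifies P stratum.
Proof.
  intros [stratum Hstratum]. exists stratum. intros c Hc.
  split; intros e q Hin Hq; specialize (Hstratum c Hc _ Hin); simpl in Hstratum;
    unfold head_candidate in Hq; destruct (head_of e);
    solve [apply Hstratum; apply Hq | subst q; exact Hstratum | contradiction].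
Qed.

Lemma wf_body_atom c e :
  wf_clause c -> In (LAtom e) (cl_body c) \/ In (LNeg e) (cl_body c) ->
  has_type e TO /\ incl (vars_term e) (vars_clause c).
Proof.
  intros [_ [_ [_ [_ Hbody]]]] Hin.
  destruct Hin as [Hl | Hl]; split; try exact (Hbody _ Hl);
    intros v Hv; apply in_or_app; right; apply in_flat_map; eexists; split; eauto.
Qed.

Section GroundInstantiation.

Variables (P : program) (stratum : nat * ty -> nat).
Hypothesis P_wf : wf_program P.
Hypothesis P_stratifies : stratifies P stratum.

Definition head_stratum (t : term) : nat :=
  match head_of t with TCon n s => stratum (n, s) | _ => 0 end.

Lemma head_stratum_inst_clause th c :
  head_stratum (rhead (inst_clause th c)) = stratum (cl_pred c).
Proof.
  unfold head_stratum, inst_clause. simpl. rewrite head_of_fold_app.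
  destruct (cl_pred c). reflexivity.
Qed.

Lemma head_stratum_subst c th e :
  In c P -> grounding P (vars_clause c) th ->
  In (LAtom e) (cl_body c) \/ In (LNeg e) (cl_body c) ->
  exists q, head_candidate P e q /\ head_stratum (subst th e) = stratum q.
Proof.
  intros Hc Hth Hin.
  destruct (wf_body_atom c e (P_wf c Hc) Hin) as [He Hvars].
  destruct (subst_head_candidate P th e He) as [q [Hq Hhead]].
  - intros v Hv. apply Hth, Hvars, Hv.
  - exists q. split; [exact Hq|]. unfold head_stratum. rewrite Hhead. destruct q. reflexivity.
Qed.

Lemma in_inst_body th c l :
  In l (rbody (inst_clause th c)) -> exists l', In l' (cl_body c) /\ l = inst_literal th l'.
Proof. simpl. intro Hl. apply in_map_iff in Hl as [l' [<- Hl']]. eauto. Qed.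

Lemma Gr_level_pos r b :
  Gr P r -> In (PPos b) (rbody r) -> head_stratum b <= head_stratum (rhead r).
Proof.
  intros [c [th [Hc [Hth ->]]]] Hin. rewrite head_stratum_inst_clause.
  destruct (in_inst_body th c _ Hin) as [[e|e1 e2|e] [Hl Heq]]; try discriminate.
  injection Heq as ->.
  destruct (head_stratum_subst c th e Hc Hth (or_introl Hl)) as [q [Hq ->]].
  exact (proj1 (P_stratifies c Hc) e q Hl Hq).
Qed.

Lemma Gr_level_neg r b :
  Gr P r -> In (PNeg b) (rbody r) -> head_stratum b < head_stratum (rhead r).
Proof.
  intros [c [th [Hc [Hth ->]]]] Hin. rewrite head_stratum_inst_clause.
  destruct (in_inst_body th c _ Hin) as [[e|e1 e2|e] [Hl Heq]]; try discriminate.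
  injection Heq as ->.
  destruct (head_stratum_subst c th e Hc Hth (or_intror Hl)) as [q [Hq ->]].
  exact (proj2 (P_stratifies c Hc) e q Hl Hq).
Qed.

End GroundInstantiation.

Theorem corollary1 (P : program) (HwfP : wf_program P) (Hstrat : stratified P) :
  exists M : term -> Prop,
    (* the perfect model of Gr(P) exists (and is unique) *)
    perfect_model (Gr P) M /\
    (forall M', perfect_model (Gr P) M' -> forall a, M' a <-> M a) /\
    (* the well-founded model exists *)
    (exists T F, well_founded_model (Gr P) T F) /\
    (* N_P = M_P : on every ground atom the well-founded value equals the
       (two-valued) perfect-model value *)
    (forall T F, well_founded_model (Gr P) T F ->
       forall a, ground_atom P a -> (T a <-> M a) /\ (F a <-> ~ M a)).
Proof.
  destruct (stratified_stratifies P Hstrat) as [stratum Hstratum].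
  pose proof (Gr_level_pos P stratum HwfP Hstratum) as Hpos.
  pose proof (Gr_level_neg P stratum HwfP Hstratum) as Hneg.
  set (M := strat_model term (Gr P) (head_stratum stratum)).
  exists M. split; [|split; [|split]].
  - apply strat_model_perfect; assumption.
  - apply perfect_model_unique; assumption.
  - exists M, (fun a => ~ M a). apply strat_model_well_founded; assumption.
  - intros T F HTF a _. apply (well_founded_model_strat_model _ _ _ Hpos Hneg T F HTF).
Qed.
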